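(* Let $\mathcal{X}$ be Polish and $\mathcal{H}\subseteq\{0,1\}^{\mathcal{X}}$ a measurable concept class that has an infinite Littlestone tree. Then for any learning algorithm $\hat h_n$ there exists a realizable distribution $P$ such that $\mathbf{E}[\mathrm{er}_P(\hat h_n)]\ge\frac{1}{32n}$ for infinitely many $n$. In particular, $\mathcal{H}$ is not learnable at rate faster than $\frac1n$.
   Context: $\mathcal{H}$ measurable: there is a Polish $\Theta$ and Borel $\mathsf{h}:\Theta\times\mathcal{X}\to\{0,1\}$ with $\mathcal{H}=\{\mathsf{h}(\theta,\cdot)\}$. $\mathrm{er}_P(h)=P\{(x,y):h(x)\ne y\}$; $P$ realizable if $\inf_{h\in\mathcal{H}}\mathrm{er}_P(h)=0$. A learning algorithm is a sequence of universally measurable maps $H_n:(\mathcal{X}\times\{0,1\})^n\times\mathcal{X}\to\{0,1\}$ with $\hat h_n(x)=H_n((X_1,Y_1),\ldots,(X_n,Y_n),x)$ for i.i.d. $(X_i,Y_i)\sim P$. Not learnable faster than $R$: every algorithm has a realizable $P$ and $C,c>0$ with $\mathbf{E}[\mathrm{er}_P(\hat h_n)]\ge CR(cn)$ for infinitely many $n$. Littlestone tree of depth $d\le\infty$: a collection $\{x_{\mathbf u}:0\le k<d,\ \mathbf u\in\{0,1\}^k\}\subseteq\mathcal{X}$ such that for every $\mathbf y\in\{0,1\}^d$ and $n<d$ there is $h\in\mathcal{H}$ with $h(x_{\mathbf y_{\le k}})=y_{k+1}$ for $0\le k\le n$, $\mathbf y_{\le k}=(y_1,\ldots,y_k)$.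 Infinite: $d=\infty$. *)

From HB Require Import structures.
From mathcomp Require Import all_boot all_order all_algebra.
From mathcomp Require Import all_classical all_reals all_analysis.
Set Implicit Arguments. Unset Strict Implicit. Unset Printing Implicit Defensive.
Import Order.TTheory GRing.Theory Num.Theory.
Local Open Scope classical_set_scope.
Local Open Scope ring_scope.

Definition polish (R : realType) (X : topologicalType) : Prop :=
  (exists D : set X, countable D /\ closure D = setT) /\
  exists dist : X -> X -> R,
    [/\ (forall x y, 0 <= dist x y /\ (dist x y = 0 <-> x = y)),
        (forall x y, dist x y = dist y x),
        (forall x y z, dist x z <= dist x y + dist y z),
        (forall A : set X, open A <->
           (forall x, A x -> exists2 e, 0 < e & [set y | dist x y < e] `<=` A)) &
        (forall u : nat -> X,
           (forall e, 0 < e -> exists N, forall m n, (N <= m)%N -> (N <= n)%N ->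
               dist (u m) (u n) < e) ->
           exists x, forall e, 0 < e -> exists N, forall n, (N <= n)%N ->
               dist (u n) x < e)].

Definition borelT (X : ptopologicalType) := g_sigma_algebraType (@open X).

(* Example space X x {0,1}, with the product sigma-algebra (Borel x discrete). *)
Definition Zsp (X : ptopologicalType) := (borelT X * bool)%type.

Definition universally_measurable (R : realType) d (T : measurableType d)
    (A : set T) : Prop :=
  forall mu : probability T R, exists B C : set T,
    [/\ measurable B, measurable C, B `<=` A, A `<=` C & mu (C `\` B) = 0%E].

Definition universally_measurable_fun (R : realType) d (T : measurableType d)
    (f : T -> bool) : Prop :=
  universally_measurable R (f @^-1` [set true]).

Definition measurable_class (R : realType) (X : ptopologicalType)
    (H : set (X -> bool)) : Prop :=
  exists (Theta : ptopologicalType) (h : Theta -> X -> bool),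
    [/\ polish R Theta,
        measurable_fun [set: (borelT Theta * borelT X)%type]
          (fun p : (borelT Theta * borelT X)%type => h p.1 p.2) &
        H = [set h th | th in [set: Theta]]].

(* Infinite Littlestone tree: nodes x_u indexed by u in {0,1}^k (k : nat);
   y_{<=k} = (y_1,...,y_k) is [:: y 0; ...; y (k-1)] and y_{k+1} is y k. *)
Definition has_infinite_littlestone_tree (X : Type) (H : set (X -> bool)) : Prop :=
  exists x : seq bool -> X,
    forall (y : nat -> bool) (n : nat),
      exists2 h, H h & forall k, (k <= n)%N -> h (x (mkseq y k)) = y k.

(* Error rate er_P(h) = P{(x,y) : h x <> y}; we use the outer measure of P,
   which coincides with P (resp. its completion) on Borel (resp. universally
   measurable) sets. *)
Definition er (R : realType) (X : ptopologicalType) (P : probability (Zsp X) R)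
    (h : X -> bool) : \bar R :=
  (mu_ext P) [set z : Zsp X | h z.1 != z.2].

Definition realizable (R : realType) (X : ptopologicalType)
    (P : probability (Zsp X) R) (H : set (X -> bool)) : Prop :=
  ereal_inf [set er P h | h in H] = 0%E.

Definition learner (X : ptopologicalType) := forall n : nat, n.-tuple (Zsp X) -> X -> bool.

Definition is_learning_algorithm (R : realType) (X : ptopologicalType)
    (A : learner X) : Prop :=
  forall n : nat, universally_measurable_fun R
    (fun p : (n.-tuple (Zsp X) * borelT X)%type => A n p.1 p.2).

Fixpoint iid_expect (R : realType) d (T : measurableType d) (P : probability T R)
    (n : nat) : (n.-tuple T -> \bar R) -> \bar R :=
  match n return (n.-tuple T -> \bar R) -> \bar R with
  | 0 => fun F => F [tuple]
  | n'.+1 => fun F =>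
      (\int[P]_z iid_expect P (fun s : n'.-tuple T => F (cons_tuple z s)))%E
  end.

Definition expected_error (R : realType) (X : ptopologicalType)
    (P : probability (Zsp X) R) (A : learner X) (n : nat) : \bar R :=
  iid_expect P (fun S : n.-tuple (Zsp X) => er P (A n S)).

Definition not_learnable_faster_than (R : realType) (X : ptopologicalType)
    (H : set (X -> bool)) (rate : R -> R) : Prop :=
  forall A : learner X, is_learning_algorithm R A ->
    exists P : probability (Zsp X) R, realizable P H /\
      exists C c : R, [/\ 0 < C, 0 < c &
        forall N : nat, exists2 n : nat, (N < n)%N &
          ((C * rate (c * n%:R))%:E <= expected_error P A n)%E].

From HB Require Import structures.
From mathcomp Require Import all_boot all_order all_algebra.
From mathcomp Require Import all_classical all_reals all_analysis.
From mathcomp Require Import measurable_realfun.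
From mathcomp Require Import ring lra.
Import Order.TTheory GRing.Theory Num.Theory.
Local Open Scope classical_set_scope.
Local Open Scope ring_scope.
Set Implicit Arguments. Unset Strict Implicit.

(* We walk down the tree adversarially,
   choosing a branch y_0 y_1 ...; the j-th atom of the branch is the labelled
   point (x(y_0..y_(j-1)), y_j), and it gets weight 2^-(j+1).  At depth D,
   with y_0..y_(D-1) chosen, let Q_D(b) be the weighted mass of the tuples
   of 2^(D-1) samples drawn among the first D atoms on which A mislabels the
   node x(y_0..y_(D-1)) when its label is b; we take y_D maximizing Q_D.
   The target P is the geometric distribution on the atoms.  It is
   realizable: the concept of H following the branch to depth m errs only
   beyond the m-th atom, on P-mass at most 2^-m.  Since
   Q_D(true) + Q_D(false) = (1 - 2^-D)^(2^(D-1)) >= 1/2 (Bernoulli), the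
   chosen label gives Q_D >= 1/4, and the expected error at n = 2^N is at
   least P{atom N+1} * 1/4 = 1/(16 n) >= 1/(32 n). *)

Section integral_atoms.
Context d (T : measurableType d) (R : realType).
Local Open Scope ereal_scope.
Import HBNNSimple.

Lemma integral_ge_atoms (P : {measure set T -> \bar R}) (a : nat -> T)
    (w v : nat -> R) (k : nat) (G : T -> \bar R) :
  (forall j, measurable [set a j]) ->
  (forall i j, (i < k)%N -> (j < k)%N -> a i = a j -> i = j) ->
  (forall j, (0 <= v j)%R) -> (forall j, (0 <= w j)%R) ->
  (forall j, (w j)%:E <= P [set a j]) -> (forall z, 0 <= G z) ->
  (forall j, (j < k)%N -> (v j)%:E <= G (a j)) ->
  (\sum_(j < k) w j * v j)%:E <= \int[P]_z G z.
Proof.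
move=> ma ainj v0 w0 wP G0 vG.
pose h := sum_nnsfun (fun j => scale_nnsfun (indic_nnsfun R (ma j)) (v0 j)) k.
have hE z : h z = (\sum_(j < k) v j * \1_[set a j] z)%R by rewrite sum_nnsfunE.
have hG z : (h z)%:E <= G z.
  rewrite hE; have [[i ik ->]|nz] := pselect (exists2 i, (i < k)%N & z = a i).
    rewrite (bigD1 (Ordinal ik)) //= big1 ?addr0.
      by rewrite indicE mem_set // mulr1; exact: vG.
    move=> j /eqP jne; rewrite indicE memNset ?mulr0 //= => aji.
    by apply: jne; apply: val_inj => /=; apply: ainj => //; rewrite aji.
  rewrite big1 // => j _; rewrite indicE memNset ?mulr0 //= => zj.
  by apply: nz; exists j.
apply: (@le_trans _ _ (\int[P]_z (h z)%:E)).
  under eq_integral do rewrite hE -sumEFin.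
  rewrite ge0_integral_sum //; last first.
  - by move=> j z _; rewrite lee_fin mulr_ge0.
  - by move=> j; apply/measurable_EFinP; apply: measurable_funM.
  rewrite -sumEFin; apply: lee_sum => j _.
  rewrite (@integralZl_indic _ _ _ _ _ measurableT (fun _ => [set a j])) //;
    last by move=> /lt_geF; rewrite v0.
  rewrite integral_indic // setIT EFinM muleC.
  by apply: lee_wpmul2l; rewrite ?lee_fin ?v0.
rewrite integralT_nnsfun ge0_integralTE //.
by apply: ereal_sup_ubound; exists h.
Qed.

End integral_atoms.

(* wsum_tuples w k c = sum over t in [0,k)^n of (prod_i w_(t_i)) * c t:
   the weighted count of index tuples, the discrete shadow of an i.i.d.
   expectation restricted to k atoms. *)
Fixpoint wsum_tuples (R : realType) (w : nat -> R) (k n : nat) :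
    (n.-tuple nat -> R) -> R :=
  match n return (n.-tuple nat -> R) -> R with
  | 0 => fun c => c [tuple]
  | n'.+1 => fun c =>
      \sum_(j < k) w j * wsum_tuples w k (fun t : n'.-tuple nat => c (cons_tuple (j : nat) t))
  end.

Section wsum_tuples_theory.
Context (R : realType) (w : nat -> R) (k : nat).

Lemma wsum_tuples_ge0 n (c : n.-tuple nat -> R) :
  (forall j, 0 <= w j) -> (forall t, 0 <= c t) -> 0 <= wsum_tuples w k c.
Proof.
move=> w0; elim: n c => [|n IH] c c0 /=; first exact: c0.
by apply: sumr_ge0 => j _; apply: mulr_ge0 => //; apply: IH.
Qed.

Lemma wsum_tuplesD n (c1 c2 : n.-tuple nat -> R) :
  wsum_tuples w k (fun t => c1 t + c2 t) = wsum_tuples w k c1 + wsum_tuples w k c2.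
Proof.
elim: n c1 c2 => [|n IH] c1 c2 //=.
by rewrite -big_split /=; apply: eq_bigr => j _; rewrite -mulrDr IH.
Qed.

Lemma wsum_tuplesZ n (c : n.-tuple nat -> R) r :
  wsum_tuples w k (fun t => r * c t) = r * wsum_tuples w k c.
Proof.
elim: n c => [|n IH] c //=.
by rewrite mulr_sumr; apply: eq_bigr => j _; rewrite IH mulrCA.
Qed.

Lemma wsum_tuples1 n :
  wsum_tuples w k (fun _ : n.-tuple nat => 1) = (\sum_(j < k) w j) ^+ n.
Proof.
elim: n => [|n IH] //=.
by rewrite exprS mulr_suml; apply: eq_bigr => j _; rewrite IH.
Qed.

End wsum_tuples_theory.

Section iid_expect_atoms.
Context d (T : measurableType d) (R : realType).
Local Open Scope ereal_scope.

Lemma iid_expect_ge0 (P : probability T R) n (F : n.-tuple T -> \bar R) :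
  (forall S, 0 <= F S) -> 0 <= iid_expect P F.
Proof.
elim: n F => [|n IH] F F0 /=; first exact: F0.
by apply: integral_ge0 => z _; apply: IH.
Qed.

Lemma iid_expect_ge_atoms (P : probability T R) (a : nat -> T) (w : nat -> R) (k : nat) :
  (forall j, measurable [set a j]) ->
  (forall i j, (i < k)%N -> (j < k)%N -> a i = a j -> i = j) ->
  (forall j, (0 <= w j)%R) -> (forall j, (w j)%:E <= P [set a j]) ->
  forall n (F : n.-tuple T -> \bar R) (c : n.-tuple nat -> R),
  (forall S, 0 <= F S) -> (forall t, (0 <= c t)%R) ->
  (forall t : n.-tuple nat, all (fun j => (j < k)%N) t -> (c t)%:E <= F (map_tuple a t)) ->
  (wsum_tuples w k c)%:E <= iid_expect P F.
Proof.
move=> ma ainj w0 wP; elim=> [|n IH] F c F0 c0 cF /=.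
  by have := cF [tuple] isT; congr (_ <= F _); apply: val_inj.
apply: (@integral_ge_atoms _ _ _ P a w
          (fun j => wsum_tuples w k (fun t => c (cons_tuple j t)))) => //.
- by move=> j; apply: wsum_tuples_ge0.
- by move=> z; apply: iid_expect_ge0.
move=> j jk; apply: IH => // t tk.
have := cF (cons_tuple j t); rewrite /= jk tk => /(_ isT).
by congr (_ <= F _); apply: val_inj.
Qed.

End iid_expect_atoms.

Definition geom_weight (R : realType) (j : nat) : R := ((2 ^ j.+1)%:R)^-1.

Lemma geom_weight_ge0 (R : realType) j : 0 <= geom_weight R j.
Proof. by rewrite /geom_weight invr_ge0. Qed.

Lemma sum_geom_weight (R : realType) m :
  \sum_(j < m) geom_weight R j = 1 - ((2 ^ m)%:R)^-1.
Proof.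
elim: m => [|m IH]; first by rewrite big_ord0 expn0 invr1 subrr.
rewrite big_ord_recr /= IH /geom_weight expnS natrM.
have h2 : (2 ^ m)%:R != 0 :> R by rewrite pnatr_eq0 expn_eq0.
by field.
Qed.

Section geometric_prob.
Context d (T : measurableType d) (R : realType) (a : nat -> T).
Local Open Scope ereal_scope.

Definition geom_weightn (j : nat) : {nonneg R} := NngNum (geom_weight_ge0 R j).

Definition geom_prob : set T -> \bar R :=
  mseries (fun j => mscale (geom_weightn j) (\d_(a j))) 0.

Lemma geom_probE A : geom_prob A = \sum_(0 <= j <oo) (geom_weight R j)%:E * \d_(a j) A.
Proof. by []. Qed.

Lemma geom_probT : geom_prob setT = 1.
Proof.
rewrite geom_probE.
have := @cvg_geometric_eseries_half R 1 0.
rewrite expr0 divr1 => /cvg_lim <- //.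
congr (limn _); apply/funext => n; rewrite /eseries; apply: eq_bigr => j _.
by rewrite diracE in_setT mule1 /geom_weight addn1 div1r.
Qed.

HB.instance Definition _ := Measure.on geom_prob.
HB.instance Definition _ :=
  Measure_isProbability.Build _ _ _ geom_prob geom_probT.

Lemma geom_prob_ge0_terms (A : set T) j : 0 <= (geom_weight R j)%:E * \d_(a j) A.
Proof. by rewrite mule_ge0 // lee_fin geom_weight_ge0. Qed.

Lemma geom_prob_ge_prefix (U : set T) m : (forall j, (j < m)%N -> U (a j)) ->
  (\sum_(j < m) geom_weight R j)%:E <= geom_prob U.
Proof.
move=> hU; rewrite geom_probE.
apply: le_trans (nneseries_lim_ge m _) => [|j _ _]; last exact: geom_prob_ge0_terms.
rewrite -sumEFin big_mkord; apply: lee_sum => j _.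
by rewrite diracE mem_set ?mule1 //; apply: hU.
Qed.

Lemma geom_prob_atom j : (geom_weight R j)%:E <= geom_prob [set a j].
Proof.
rewrite geom_probE.
apply: le_trans (nneseries_lim_ge j.+1 _) => [|i _ _]; last exact: geom_prob_ge0_terms.
rewrite big_mkord big_ord_recr /= diracE mem_set // mule1 leeDr //.
by apply: sume_ge0 => i _; apply: geom_prob_ge0_terms.
Qed.

Lemma geom_prob_compl (U : set T) m : measurable U ->
  (forall j, (j < m)%N -> U (a j)) -> geom_prob (~` U) <= (((2 ^ m)%:R)^-1)%:E.
Proof.
move=> mU hU; rewrite probability_setC // leeBlDr ?fin_num_measure //.
have := geom_prob_ge_prefix hU; rewrite sum_geom_weight => hU'.
by apply: le_trans (leeD2l _ hU'); rewrite -EFinD lee_fin; lra.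
Qed.

End geometric_prob.

(* Points of a Polish space are closed (the ball of radius dist z p around
   z misses p), so singletons of X x {0,1} are measurable: the atoms of the
   geometric distribution are events. *)
Lemma polish_closed_set1 (R : realType) (X : ptopologicalType) (p : X) :
  polish R X -> closed [set p].
Proof.
move=> [_ [dist [dpos _ _ dopen _]]]; rewrite -openC; apply/dopen => z zp.
exists (dist z p); last by move=> u /= hu up; rewrite up ltxx in hu.
have [+ [dz _]] := dpos z p; rewrite le_eqVlt => /orP[/eqP/esym/dz|] //.
Qed.

Lemma Zsp_measurable_set1 (R : realType) (X : ptopologicalType) (z : Zsp X) :
  polish R X -> measurable [set z].
Proof.
case: z => p b HX.
have -> : [set (p, b)] = [set p] `*` [set b] :> set (Zsp X).
  by apply/seteqP; split => [[u v] /= [-> ->]|[u v] /= [-> ->]].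
apply: measurableX => //.
rewrite -(setCK [set p]); apply: measurableC; apply: sub_gen_smallest.
by rewrite openC; exact: polish_closed_set1 HX.
Qed.

(* Nodes along a branch of a Littlestone tree are pairwise distinct: a concept
   consistent with a branch that is flipped after depth i must label the node
   x(y_<=i) both y_i and its negation if it reappeared at depth j > i. *)
Lemma littlestone_branch_injective (X : Type) (H : set (X -> bool))
    (x : seq bool -> X) :
  (forall (y : nat -> bool) (n : nat),
      exists2 h, H h & forall k, (k <= n)%N -> h (x (mkseq y k)) = y k) ->
  forall y i j, (i < j)%N -> x (mkseq y i) <> x (mkseq y j).
Proof.
move=> Ht y i j ij E.
pose y' m := if (m < j)%N then y m else ~~ y i.
have [h _ hh] := Ht y' j.
have agree k : (k <= j)%N -> mkseq y' k = mkseq y k.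
  move=> kj; apply/eq_in_map => m; rewrite mem_iota add0n => /andP[_ mk].
  by rewrite /y' (leq_trans mk kj).
have := hh i (ltnW ij); have := hh j (leqnn j).
rewrite !agree ?(ltnW ij) // -E /y' ij ltnn => ->.
by case: (y i).
Qed.

Lemma bernoulli_ineq (R : realFieldType) (u : R) n : 0 <= u -> u <= 1 ->
  1 - n%:R * u <= (1 - u) ^+ n.
Proof.
move=> u0 u1; elim: n => [|n IH]; first by rewrite mul0r subr0 expr0.
have a0 : 0 <= (1 - u) ^+ n by apply: exprn_ge0; lra.
rewrite exprS -natr1; set a := (1 - u) ^+ n in IH a0 *.
have h1 : 0 <= (a - (1 - n%:R * u)) * (1 - u) by apply: mulr_ge0; lra.
have h2 : 0 <= n%:R * (u * u) by apply: mulr_ge0 => //; apply: mulr_ge0.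
nra.
Qed.

Lemma half_le_expn_inv2n (R : realFieldType) n : (0 < n)%N ->
  2^-1 <= (1 - (2 * n%:R)^-1) ^+ n :> R.
Proof.
move=> n0; have n1 : 1 <= n%:R :> R by rewrite ler1n.
have u0 : 0 <= (2 * n%:R)^-1 :> R by rewrite invr_ge0; lra.
have u1 : (2 * n%:R)^-1 <= 1 :> R by rewrite invf_le1; lra.
have halfE : n%:R * (2 * n%:R)^-1 = 2^-1 :> R by field; rewrite pnatr_eq0 -lt0n.
by have := bernoulli_ineq n u0 u1; rewrite halfE; lra.
Qed.

Lemma exists_inv_pow2_lt (R : archiRealFieldType) (e : R) : 0 < e ->
  exists m, ((2 ^ m)%:R)^-1 < e.
Proof.
move=> e0; have lt_trunc := archimedean.Num.Theory.truncnS_gt (e^-1).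
set m := Num.truncn _ in lt_trunc.
exists m.+1; rewrite -[e in _ < e]invrK ltf_pV2 ?posrE ?invr_gt0 ?ltr0n ?expn_gt0 //.
by apply: lt_trans lt_trunc _; rewrite ltr_nat ltn_expl.
Qed.

Unset Implicit Arguments.
Set Strict Implicit.

Section adversary.
Variables (R : realType) (X : ptopologicalType) (A : learner X) (x : seq bool -> X).

Definition sample_size (D : nat) : nat := (2 ^ D.-1)%N.

Definition prefix_atom (s : seq bool) (j : nat) : Zsp X := (x (take j s), nth false s j).

Definition error_mass (D : nat) (s : seq bool) (b : bool) : R :=
  wsum_tuples (geom_weight R) D (fun t : (sample_size D).-tuple nat =>
    ((A (sample_size D) (map_tuple (prefix_atom s) t) (x s) != b) : bool)%:R).

Definition adversarial_label (D : nat) (s : seq bool) : bool :=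
  error_mass D s false <= error_mass D s true.

Fixpoint adversarial_prefix (D : nat) : seq bool :=
  if D is D'.+1 then rcons (adversarial_prefix D') (adversarial_label D' (adversarial_prefix D'))
  else [::].

Definition branch (D : nat) : bool := adversarial_label D (adversarial_prefix D).

Definition branch_atom (j : nat) : Zsp X := (x (mkseq branch j), branch j).

Definition hard_distribution : set (Zsp X) -> \bar R := @geom_prob _ _ R branch_atom.

Lemma adversarial_prefixE D : mkseq branch D = adversarial_prefix D.
Proof. by elim: D => //= D IH; rewrite mkseqS IH. Qed.

Lemma prefix_atom_branch D j : (j < D)%N ->
  prefix_atom (adversarial_prefix D) j = branch_atom j.
Proof.
move=> jD; rewrite /prefix_atom -adversarial_prefixE /branch_atom nth_mkseq //.
by rewrite /mkseq -map_take take_iota (minn_idPl (ltnW jD)).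
Qed.

(* The two labels split the total weight (1 - 2^-D)^n, and the adversarial
   one gets at least half of it. *)
Lemma error_mass_branch D :
  (1 - ((2 ^ D)%:R)^-1) ^+ sample_size D <=
    2 * error_mass D (adversarial_prefix D) (branch D).
Proof.
set s := adversarial_prefix D.
have total : error_mass D s true + error_mass D s false
    = (1 - ((2 ^ D)%:R)^-1) ^+ sample_size D.
  rewrite /error_mass -wsum_tuplesD -sum_geom_weight -wsum_tuples1.
  congr wsum_tuples; apply/funext => t.
  by case: (A _ _ _); rewrite /= ?add0r ?addr0.
rewrite -total /branch -/s /adversarial_label.
case: (boolP (error_mass D s false <= error_mass D s true)) => [le_ft|].
  by lra.
by rewrite -ltNge => /ltW le_tf; lra.
Qed.

Section hard_distribution_properties.
Variable H : set (X -> bool).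
Hypothesis HX : polish R X.
Hypothesis Htree : forall (y : nat -> bool) (n : nat),
  exists2 h, H h & forall k, (k <= n)%N -> h (x (mkseq y k)) = y k.

Lemma branch_atom_inj i j : branch_atom i = branch_atom j -> i = j.
Proof.
move=> [] E _; case: (ltngtP i j) => // ij.
  by case: (littlestone_branch_injective Htree ij E).
by case: (littlestone_branch_injective Htree ij (esym E)).
Qed.

(* A concept following the branch to depth m errs only off the first m atoms. *)
Lemma branch_concept_error m :
  exists2 h, H h & (er hard_distribution h <= (((2 ^ m)%:R)^-1)%:E)%E.
Proof.
have [h Hh hh] := Htree branch m; exists h => //.
pose U := \bigcup_(j < m) [set branch_atom j].
have mU : measurable U.
  by apply: bigcup_measurable => j _; exact: Zsp_measurable_set1 HX.
have errU : [set z : Zsp X | h z.1 != z.2] `<=` ~` U.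
  move=> z /= hz [j /= jm zj]; move: hz; rewrite zj /= hh ?eqxx //.
  exact: ltnW.
rewrite /er; apply: le_trans (le_mu_ext _ errU) _.
rewrite measurable_mu_extE; last exact: measurableC.
by apply: geom_prob_compl => // j jm; exists j.
Qed.

(* The infimum of the errors over H is 0 since the errors of the branch
   concepts are below every 2^-m. *)
Lemma hard_realizable : realizable hard_distribution H.
Proof.
apply/eqP; rewrite eq_le; apply/andP; split; last first.
  by apply: le_ereal_inf_tmp => _ [h _ <-]; exact: mu_ext_ge0.
apply/lee_addgt0Pr => e e0; rewrite add0e.
have [m lt_e] := exists_inv_pow2_lt e0.
have [h Hh err_h] := branch_concept_error m.
apply: ge_ereal_inf; exists (er hard_distribution h); first by exists h.
by apply: le_trans err_h _; rewrite lee_fin ltW.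
Qed.

(* On samples from the first D atoms, A mislabels the atom D (which has mass
   2^-(D+1)) with weighted mass error_mass D (adversarial_prefix D) (branch D). *)
Lemma expected_error_ge_mass D :
  ((geom_weight R D * error_mass D (adversarial_prefix D) (branch D))%:E
     <= expected_error hard_distribution A (sample_size D))%E.
Proof.
rewrite /error_mass -wsum_tuplesZ.
apply: (iid_expect_ge_atoms (a := branch_atom)).
- by move=> j; exact: Zsp_measurable_set1 HX.
- by move=> i j _ _; exact: branch_atom_inj.
- exact: geom_weight_ge0.
- exact: geom_prob_atom.
- by move=> S; exact: mu_ext_ge0.
- by move=> t; apply: mulr_ge0; [exact: geom_weight_ge0|exact: ler0n].
move=> t tD.
have -> : map_tuple (prefix_atom (adversarial_prefix D)) t = map_tuple branch_atom t.
  apply: val_inj; apply/eq_in_map => j jt; apply: prefix_atom_branch.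
  by move/allP: tD => /(_ j jt).
case: eqP => [_|err]; first by rewrite mulr0; exact: mu_ext_ge0.
rewrite mulr1 /er.
have atom_err : [set branch_atom D] `<=`
    [set z : Zsp X | A (sample_size D) (map_tuple branch_atom t) z.1 != z.2].
  move=> z -> /=; rewrite adversarial_prefixE; exact/eqP.
apply: le_trans (le_mu_ext _ atom_err).
by rewrite measurable_mu_extE; [exact: geom_prob_atom|exact: Zsp_measurable_set1 HX].
Qed.

(* At n = 2^N (depth N+1): 2^-(N+2) * 1/4 = 1/(16 n) >= 1/(32 n). *)
Lemma hard_lower_bound N :
  (((32 * (2 ^ N)%:R)^-1)%:E <= expected_error hard_distribution A (2 ^ N)%N)%E.
Proof.
apply: le_trans (expected_error_ge_mass N.+1); rewrite lee_fin.
set q := error_mass _ _ _; set n := (2 ^ N)%N.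
have n0 : 0 < n%:R :> R by rewrite ltr0n expn_gt0.
have q_ge : 4^-1 <= q.
  have := error_mass_branch N.+1.
  rewrite -/q (_ : sample_size N.+1 = n) // expnS natrM -/n.
  by have := @half_le_expn_inv2n R n (expn_gt0 2 N); lra.
have -> : geom_weight R N.+1 = (4 * n%:R)^-1.
  by rewrite /geom_weight !expnS mulnA natrM.
apply: le_trans (ler_wpM2l _ q_ge); last by rewrite invr_ge0; lra.
by rewrite -invfM lef_pV2 ?posrE; lra.
Qed.

End hard_distribution_properties.
End adversary.

Theorem mainTheorem8 (R : realType) (X : ptopologicalType) (H : set (X -> bool)) :
  polish R X -> measurable_class R H -> has_infinite_littlestone_tree H ->
  (forall A : learner X, is_learning_algorithm R A ->
     exists P : probability (Zsp X) R, realizable P H /\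
       forall N : nat, exists2 n : nat, (N < n)%N &
         (((32 * n%:R)^-1)%:E <= expected_error P A n)%E)
  /\ not_learnable_faster_than H (fun t : R => t^-1).
Proof.
move=> HX _ [x Htree].
have lower_bound (A : learner X) : exists P : probability (Zsp X) R, realizable P H /\
    forall N : nat, exists2 n : nat, (N < n)%N &
      (((32 * n%:R)^-1)%:E <= expected_error P A n)%E.
  exists (hard_distribution R X A x); split; first exact: hard_realizable.
  move=> N; exists (2 ^ N)%N; first by rewrite ltn_expl.
  exact: hard_lower_bound.
split=> [A _|A _]; first exact: lower_bound.
have [P [realP lbP]] := lower_bound A; exists P; split=> //.
exists (32^-1 : R), (1 : R); split=> // N.
by have [n Nn hn] := lbP N; exists n; rewrite // mul1r -invfM.
Qed.
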